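(* For every integer $d\ge1$ there is a constant $C>0$ depending only on $d$ such that the following holds. Let $L\in\mathcal A_d$, $\eta>0$, $m\ge d+2$, and let $z_1,\dots,z_m\in B(L,\eta)$. Then there exist distinct indices $i_1,\dots,i_{d+1}\in\{1,\dots,m\}$ and $H\in\mathcal A_d$ containing $z_{i_1},\dots,z_{i_{d+1}}$ (so that $H$ is their affine hull whenever these $d+1$ points are affinely independent) such that $z_1,\dots,z_m\in B(H,C\eta)$.
   Context: $\mathcal A_d$ denotes the set of $d$-dimensional affine subspaces of $\mathbb R^D$. For $A\subset\mathbb R^D$ and $r>0$, $B(A,r)=\{y\in\mathbb R^D:\inf_{a\in A}\|y-a\|<r\}$ (Euclidean norm). *)

From Stdlib Require Import Reals.
From mathcomp Require Import all_boot.
Set Implicit Arguments. Unset Strict Implicit. Unset Printing Implicit Defensive.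
Local Open Scope R_scope.

Definition vec (D : nat) := 'I_D -> R.

Definition vadd D (x y : vec D) : vec D := fun i => x i + y i.
Definition vsub D (x y : vec D) : vec D := fun i => x i - y i.

Definition enorm D (x : vec D) : R := sqrt (\big[Rplus/0]_(i < D) (x i * x i)).

Definition lincomb D d (t : 'I_d -> R) (v : 'I_d -> vec D) : vec D :=
  fun i => \big[Rplus/0]_(j < d) (t j * v j i).

Definition lin_indep D d (v : 'I_d -> vec D) : Prop :=
  forall t : 'I_d -> R, (forall i, lincomb t v i = 0) -> forall j, t j = 0.

Definition is_affine_d (D d : nat) (A : vec D -> Prop) : Prop :=
  exists (p : vec D) (v : 'I_d -> vec D), lin_indep v /\
    forall x, A x <-> exists t : 'I_d -> R, x = vadd p (lincomb t v).

(* y \in B(A,r)  :<->  inf_{a in A} ||y - a|| < r, i.e. some a in A has ||y-a|| < r. *)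
Definition inB D (A : vec D -> Prop) (r : R) (y : vec D) : Prop :=
  exists a, A a /\ enorm (vsub y a) < r.

From Stdlib Require Import Reals FunctionalExtensionality.
From mathcomp Require Import all_boot all_order all_algebra perm.
From mathcomp Require Import Rstruct.
From mathcomp.algebra_tactics Require Import ring lra.
Set Implicit Arguments. Unset Strict Implicit. Unset Printing Implicit Defensive.

(* Write z_k = p + t_k V + e_k with ||e_k|| < eta, the rows of V spanning the
   direction of L, and take coordinates u_k = (z_k - z_0) V^T.  Among frames
   made of d of the u_k completed by unit vectors, pick one using as many u_k
   as possible and, among those, of maximal |det|; by Cramer's rule every u_k
   is a combination s of the chosen u's with all |s_j| <= 1.  The point
   z_0 + sum_j s_j (z_(g j) - z_0) of the hull H differs from z_k by a vector
   orthogonal to the rows of V, which in turn differs from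
   e_k - e_0 - sum_j s_j (e_(g j) - e_0) by a vector of their span; so its
   length is at most that of this error, which is O(eta) with a constant
   depending only on d. *)

Import Order.TTheory GRing.Theory Num.Theory.
Local Open Scope ring_scope.

Section RowReplacement.
Variable R : comNzRingType.

Definition row_repl n (X : 'M[R]_n) (j : 'I_n) (r : 'rV[R]_n) : 'M[R]_n :=
  \matrix_(i, k) (if i == j then r 0 k else X i k).

Lemma row_row_repl n (X : 'M[R]_n) j r i :
  row i (row_repl X j r) = if i == j then r else row i X.
Proof. by apply/rowP => k; rewrite !mxE; case: eqP => _; rewrite ?mxE. Qed.

Lemma row_repl_mul n (X : 'M[R]_n) j s :
  row_repl X j (s *m X) = row_repl 1%:M j s *m X.
Proof.
apply/row_matrixP => i; rewrite row_mul !row_row_repl.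
by case: eqP => // _; rewrite row1 -rowE.
Qed.

Lemma cofactor_row_repl n (X : 'M[R]_n) j r k :
  cofactor (row_repl X j r) j k = cofactor X j k.
Proof.
rewrite /cofactor; congr (_ * \det _); apply/matrixP => a b.
by rewrite !mxE eq_sym (negPf (neq_lift _ _)).
Qed.

Lemma det_row_repl1 n j (s : 'rV[R]_n) : \det (row_repl 1%:M j s) = s 0 j.
Proof.
have {2}<- : s *m \adj 1%:M = s by rewrite adj1 mulmx1.
rewrite (expand_det_row _ j) mxE; apply: eq_bigr => k _.
by rewrite cofactor_row_repl !mxE eqxx.
Qed.

Lemma det_row_repl_mul n (X : 'M[R]_n) j (s : 'rV[R]_n) :
  \det (row_repl X j (s *m X)) = s 0 j * \det X.
Proof. by rewrite row_repl_mul det_mulmx det_row_repl1. Qed.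

End RowReplacement.

Section BoundedSpanningSubfamily.
Variables (F : realFieldType) (d m : nat) (u : 'I_m -> 'rV[F]_d).

Local Notation config := ({ffun 'I_d -> 'I_m} * {ffun 'I_d -> bool})%type.

Definition frame (c : config) : 'M[F]_d :=
  \matrix_j (if c.2 j then u (c.1 j) else delta_mx 0 j).

Definition admissible (c : config) := injectiveb c.1 && (\det (frame c) != 0).

Definition weight (c : config) := #|[pred j | c.2 j]|.

(* Swapping [c.1 j] and [k], rather than overwriting [c.1 j], keeps the index
   map injective. *)
Definition exchange (c : config) (j : 'I_d) (k : 'I_m) : config :=
  ([ffun x => tperm (c.1 j) k (c.1 x)], [ffun x => (x == j) || c.2 x]).

(* A nonzero coordinate at [j] rules out that [k] is already used in another
   row of the frame. *)
Lemma frame_exchange c j k : admissible c ->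
  (u k *m invmx (frame c)) 0 j != 0 ->
  frame (exchange c j k) = row_repl (frame c) j (u k).
Proof.
case: c => g b /andP [/injectiveP /= g_inj det_neq0] s_neq0.
apply/row_matrixP => x; rewrite row_row_repl !rowK !ffunE /=.
case: eqP => [-> | /eqP x_neq_j]; first by rewrite /= tpermL.
case b_x: (b x) => //=; congr (u _); apply: tpermD.
  by apply: contra x_neq_j => /eqP /g_inj ->.
apply: contra s_neq0 => /eqP k_eq.
have X_unit : frame (g, b) \in unitmx by rewrite unitmxE unitfE.
have -> : u k = delta_mx 0 x *m frame (g, b) by rewrite -rowE rowK b_x k_eq.
by rewrite mulmxK // mxE eqxx [j == x]eq_sym (negPf x_neq_j).
Qed.

Lemma exchange_bound c j k : admissible c ->
  (forall c', admissible c' -> (weight c' <= weight c)%N) ->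
  (forall c', admissible c' -> weight c' = weight c ->
     `|\det (frame c')| <= `|\det (frame c)|) ->
  (u k *m invmx (frame c)) 0 j != 0 ->
  c.2 j && (`|(u k *m invmx (frame c)) 0 j| <= 1).
Proof.
case: c => g b adm_c weight_max det_max; set X := frame (g, b) => s_neq0.
have X_unit : X \in unitmx by rewrite unitmxE unitfE; case/andP: adm_c.
have ex_det :
    \det (frame (exchange (g, b) j k)) = (u k *m invmx X) 0 j * \det X.
  by rewrite frame_exchange // -{1}[u k](mulmxKV X_unit) det_row_repl_mul.
have adm_ex : admissible (exchange (g, b) j k).
  case/andP: adm_c => /injectiveP g_inj det_neq0.
  apply/andP; split; last by rewrite ex_det mulf_neq0.
  by apply/injectiveP => x y; rewrite !ffunE /= => /perm_inj /g_inj.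
have b_j : b j.
  apply/negPn/negP => nb_j; have := weight_max _ adm_ex.
  rewrite /weight (eq_card (B := [predU1 j & [pred x | b x]])).
    by rewrite cardU1 inE nb_j ltnn.
  by move=> x; rewrite !inE ffunE.
have same_weight : weight (exchange (g, b) j k) = weight (g, b).
  by apply: eq_card => x; rewrite !inE ffunE /=; case: eqP => // ->.
have := det_max _ adm_ex same_weight.
rewrite ex_det normrM b_j /= -{2}[`|\det X|]mul1r ler_pM2r // normr_gt0.
by case/andP: adm_c.
Qed.

Hypothesis d_le_m : (d <= m)%N.

Lemma bounded_spanning_subfamily : exists g : 'I_d -> 'I_m, injective g /\
  forall k, exists s : 'rV[F]_d,
    u k = s *m \matrix_j u (g j) /\ forall j, `|s 0 j| <= 1.
Proof.
pose c0 := (finfun (widen_ord d_le_m), [ffun=> false] : {ffun 'I_d -> bool}).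
have adm_c0 : admissible c0.
  apply/andP; split.
    apply/injectiveP => x y /=; rewrite !ffunE => /(congr1 val) /= xy.
    exact: val_inj.
  suff -> : frame c0 = 1%:M by rewrite det1 oner_neq0.
  by apply/row_matrixP => j; rewrite rowK ffunE row1.
case: (arg_maxnP weight adm_c0) => c1 adm_c1 c1_max.
pose P c := admissible c && (weight c == weight c1).
have P_c1 : P c1 by rewrite /P adm_c1 eqxx.
case: (arg_maxP (fun c => `|\det (frame c)|) P_c1) => [[g b]].
move=> /andP [adm_c /eqP weight_c] c_max.
exists g; split => [|k]; first by case/andP: adm_c => /injectiveP.
pose X := frame (g, b); pose s := u k *m invmx X.
have X_unit : X \in unitmx by rewrite unitmxE unitfE; case/andP: adm_c.
have used_bounded j : s 0 j != 0 -> b j && (`|s 0 j| <= 1).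
  apply: (exchange_bound adm_c) => [c' /c1_max | c' adm_c' weight_c'].
    by rewrite weight_c.
  by apply: c_max; rewrite /P adm_c' weight_c' weight_c eqxx.
exists s; split => [|j]; last first.
  case: (eqVneq (s 0 j) 0) => [-> | /used_bounded /andP []//].
  by rewrite normr0.
rewrite -[u k](mulmxKV X_unit) -/s !mulmx_sum_row; apply: eq_bigr => j _.
rewrite !rowK /=; case b_j: (b j) => //.
have := used_bounded j; rewrite b_j /= => /contraNeq /(_ isT) ->.
by rewrite !scale0r.
Qed.

End BoundedSpanningSubfamily.

Section SquaredNorm.
Variable F : realFieldType.

Definition sqnorm n (x : 'rV[F]_n) : F := (x *m x^T) 0 0.

Lemma sqnormE n (x : 'rV[F]_n) : sqnorm x = \sum_i x 0 i ^+ 2.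
Proof. by rewrite /sqnorm mxE; apply: eq_bigr => i _; rewrite mxE expr2. Qed.

Lemma sqnorm_ge0 n (x : 'rV[F]_n) : 0 <= sqnorm x.
Proof. by rewrite sqnormE sumr_ge0 // => i _; rewrite sqr_ge0. Qed.

Lemma sqnormZ n a (x : 'rV[F]_n) : sqnorm (a *: x) = a ^+ 2 * sqnorm x.
Proof.
by rewrite !sqnormE mulr_sumr; apply: eq_bigr => i _; rewrite mxE exprMn.
Qed.

Lemma sqnormD_le n (x y : 'rV[F]_n) :
  sqnorm (x + y) <= 2 * (sqnorm x + sqnorm y).
Proof.
rewrite !sqnormE -big_split mulr_sumr /=; apply: ler_sum => i _; rewrite mxE.
by have := sqr_ge0 (x 0 i - y 0 i); nra.
Qed.

Lemma sqnormB_le n (x y : 'rV[F]_n) :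
  sqnorm (x - y) <= 2 * (sqnorm x + sqnorm y).
Proof.
have <- : sqnorm (- y) = sqnorm y.
  by rewrite -scaleN1r sqnormZ sqrrN expr1n mul1r.
exact: sqnormD_le.
Qed.

Lemma sqnorm_sum_le k n (y : 'I_n -> 'rV[F]_k) M : 0 <= M ->
  (forall j, sqnorm (y j) <= M) -> sqnorm (\sum_j y j) <= (4 ^ n)%:R * M.
Proof.
move=> M_ge0; elim: n y => [|n IHn] y y_le.
  by rewrite big_ord0 sqnormE big1 ?mul1r // => i _; rewrite mxE expr0n.
rewrite big_ord_recr /= (le_trans (sqnormD_le _ _)) //.
have := IHn _ (fun j => y_le (widen_ord (leqnSn n) j)); have := y_le ord_max.
have : 1 <= (4 ^ n)%:R :> F by rewrite ler1n expn_gt0.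
rewrite expnS natrM; nra.
Qed.

Lemma sqnorm_le_add_rowspace n k (y : 'rV[F]_n) (V : 'M[F]_(k, n)) q :
  y *m V^T = 0 -> sqnorm y <= sqnorm (y + q *m V).
Proof.
move=> y_orth; set w := q *m V.
have yw : y *m w^T = 0 by rewrite trmx_mul mulmxA y_orth mul0mx.
have wy : w *m y^T = 0 by rewrite -[w *m _]trmxK trmx_mul trmxK yw trmx0.
rewrite /sqnorm linearD /= mulmxDl !mulmxDr yw wy addr0 add0r.
by rewrite [X in _ <= X]mxE lerDl sqnorm_ge0.
Qed.

End SquaredNorm.

Section AffineFit.
Variables (F : realFieldType) (d D m : nat) (V : 'M[F]_(d, D)) (p : 'rV[F]_D).
Variables (Z : 'I_m.+1 -> 'rV[F]_D) (e : F).
Hypothesis d_le_m : (d <= m)%N.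
Hypothesis Z_near :
  forall k, exists t : 'rV[F]_d, sqnorm (Z k - (p + t *m V)) < e.

Lemma affine_fit : exists g : 'I_d -> 'I_m, injective g /\
  forall k, exists s : 'rV[F]_d,
    sqnorm (Z k - (Z 0 + s *m \matrix_j (Z (lift 0 (g j)) - Z 0)))
      < (8 + 8 * 4 ^ d)%:R * e.
Proof.
have [T E_small] := fin_all_exists Z_near.
pose E k := Z k - (p + T k *m V).
pose u j := (Z (lift 0 j) - Z 0) *m V^T.
have [g [g_inj span]] := bounded_spanning_subfamily u d_le_m.
exists g; split => // k.
pose A := \matrix_j (Z (lift 0 (g j)) - Z 0).
have [s [s_coord s_le1]] : exists s : 'rV[F]_d,
    (Z k - Z 0) *m V^T = s *m \matrix_j u (g j) /\ forall j, `|s 0 j| <= 1.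
  case: (unliftP 0 k) => [k' -> | ->]; first exact: span.
  by exists 0; split => [|j]; rewrite ?subrr ?mul0mx // mxE normr0.
exists s.
pose TA := \matrix_j (T (lift 0 (g j)) - T 0).
pose EA := \matrix_j (E (lift 0 (g j)) - E 0).
have E_diff x : E x - E 0 = (Z x - Z 0) - (T x - T 0) *m V.
  rewrite /E mulmxBl; move: (T x *m V) (T 0 *m V) => a b.
  by apply/rowP => i; rewrite !mxE; ring.
have EA_def : EA = A - TA *m V.
  by apply/row_matrixP => j; rewrite linearB /= row_mul !rowK E_diff.
have y_orth : (Z k - (Z 0 + s *m A)) *m V^T = 0.
  have AV : A *m V^T = \matrix_j u (g j).
    by apply/row_matrixP => j; rewrite row_mul !rowK.
  by rewrite opprD addrA mulmxBl s_coord -mulmxA AV subrr.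
have err_eq : (E k - E 0) - s *m EA
    = (Z k - (Z 0 + s *m A)) + (s *m TA - (T k - T 0)) *m V.
  rewrite E_diff EA_def mulmxBr mulmxA [in RHS]mulmxBl.
  move: (Z k) (Z 0) (s *m A) ((T k - T 0) *m V) (s *m TA *m V) => a b c x w.
  by apply/rowP => i; rewrite !mxE; ring.
have e_ge0 : 0 <= e := le_trans (sqnorm_ge0 _) (ltW (E_small 0)).
have E_diff_lt x : sqnorm (E x - E 0) < 4 * e.
  apply: le_lt_trans (sqnormB_le _ _) _.
  by have := E_small x; have := E_small 0; lra.
have sEA_le : sqnorm (s *m EA) <= (4 ^ d)%:R * (4 * e).
  rewrite mulmx_sum_row; apply: sqnorm_sum_le => [|j]; first lra.
  have s2_le1 : s 0 j ^+ 2 <= 1.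
    by rewrite -real_normK ?num_real // expr_le1 ?normr_ge0.
  rewrite sqnormZ rowK; have := E_diff_lt (lift 0 (g j)).
  have := sqnorm_ge0 (E (lift 0 (g j)) - E 0); have := sqr_ge0 (s 0 j); nra.
apply: le_lt_trans (sqnorm_le_add_rowspace (s *m TA - (T k - T 0)) y_orth) _.
rewrite -err_eq.
apply: le_lt_trans (sqnormB_le _ _) _; have := E_diff_lt k.
rewrite natrD natrM; nra.
Qed.

End AffineFit.

Lemma row_free_extension (K : fieldType) d D (A : 'M[K]_(d, D)) :
  (d <= D)%N -> exists B : 'M[K]_(d, D), row_free B /\ (A <= B)%MS.
Proof.
move=> d_le_D; exists (pid_mx d *m row_ebase A); split.
  rewrite /row_free mxrankMfree ?rank_pid_mx //.
  by rewrite row_free_unit row_ebase_unit.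
rewrite -{1}(mulmx_ebase A).
have -> : (pid_mx (\rank A) : 'M[K]_(d, D)) =
           (pid_mx (\rank A) : 'M_d) *m pid_mx d.
  have rA_le_d := rank_leq_row A.
  by rewrite mul_pid_mx (minn_idPl rA_le_d) (minn_idPr rA_le_d).
by rewrite !mulmxA -(mulmxA _ (pid_mx d)) submxMl.
Qed.

Lemma affine_hull_fit (F : realFieldType) d D m (V : 'M[F]_(d, D)) p
    (Z : 'I_m.+1 -> 'rV[F]_D) e :
  row_free V -> (d <= m)%N ->
  (forall k, exists t : 'rV[F]_d, sqnorm (Z k - (p + t *m V)) < e) ->
  exists (g : 'I_d -> 'I_m) (B : 'M[F]_(d, D)), [/\ injective g, row_free B,
    forall j, exists t : 'rV[F]_d, Z (lift 0 (g j)) = Z 0 + t *m B &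
    forall k, exists t : 'rV[F]_d,
      sqnorm (Z k - (Z 0 + t *m B)) < (8 + 8 * 4 ^ d)%:R * e].
Proof.
move=> V_free d_le_m Z_near.
have [g [g_inj fit]] := affine_fit d_le_m Z_near.
have d_le_D : (d <= D)%N by rewrite -(eqP V_free) rank_leq_col.
have [B [B_free /submxP [M A_eq]]] :=
  row_free_extension (\matrix_j (Z (lift 0 (g j)) - Z 0)) d_le_D.
exists g, B; split => // [j | k].
  by exists (row j M); rewrite -row_mul -A_eq rowK addrC subrK.
by have [s s_fit] := fit k; exists (s *m M); rewrite -mulmxA -A_eq.
Qed.

Definition adjoin0 n m (g : 'I_n -> 'I_m) (i : 'I_(n + 1)) : 'I_m.+1 :=
  if split i is inl j then lift 0 (g j) else 0.

Lemma adjoin0_inj n m (g : 'I_n -> 'I_m) :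
  injective g -> injective (adjoin0 g).
Proof.
move=> g_inj a b; rewrite /adjoin0.
case: splitP => [ja a_eq | ka a_eq]; case: splitP => [jb b_eq | kb b_eq].
- by move/lift_inj/g_inj => ja_jb; apply: val_inj; rewrite /= a_eq b_eq ja_jb.
- by move/eqP; rewrite eq_sym (negPf (neq_lift _ _)).
- by move/eqP; rewrite (negPf (neq_lift _ _)).
- by move=> _; apply: val_inj; rewrite /= a_eq b_eq !ord1.
Qed.

Definition rowv D (x : vec D) : 'rV[R]_D := \row_i x i.

Lemma rowv_inj D : injective (@rowv D).
Proof.
move=> x y xy; apply: functional_extensionality => i.
by have := congr1 (fun r : 'rV[R]_D => r 0 i) xy; rewrite !mxE.
Qed.

Lemma rowvK D (r : 'rV[R]_D) : rowv (fun i => r 0 i) = r.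
Proof. by apply/rowP => i; rewrite mxE. Qed.

Lemma rowv_vadd D (x y : vec D) : rowv (vadd x y) = rowv x + rowv y.
Proof. by apply/rowP => i; rewrite !mxE. Qed.

Lemma rowv_vsub D (x y : vec D) : rowv (vsub x y) = rowv x - rowv y.
Proof. by apply/rowP => i; rewrite !mxE. Qed.

Lemma rowv_lincomb D d (t : 'I_d -> R) (v : 'I_d -> vec D) :
  rowv (lincomb t v) = rowv t *m \matrix_(j, i) v j i.
Proof.
by apply/rowP => i; rewrite !mxE; apply: eq_bigr => j _; rewrite !mxE.
Qed.

Lemma enormE D (x : vec D) : enorm x = Num.sqrt (sqnorm (rowv x)).
Proof.
rewrite /enorm RsqrtE sqnormE; congr Num.sqrt.
by apply: eq_bigr => i _; rewrite mxE expr2.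
Qed.

Lemma enorm_lt D (x : vec D) r :
  0 < r -> (enorm x < r) = (sqnorm (rowv x) < r ^+ 2).
Proof.
move=> r_gt0; rewrite enormE -{1}(gtr0_norm r_gt0) -sqrtr_sqr ltr_sqrt //.
exact: exprn_gt0.
Qed.

Lemma lin_indep_row_free D d (v : 'I_d -> vec D) :
  lin_indep v <-> row_free (\matrix_(j, i) v j i).
Proof.
split => [v_indep | v_free t t0 j].
  apply/inj_row_free => c cV0; apply/rowP => j; rewrite mxE.
  apply: (v_indep (fun j => c 0 j)) => i.
  have := rowv_lincomb (fun j => c 0 j) v.
  by rewrite rowvK cV0 => /rowP /(_ i); rewrite !mxE.
have : rowv t *m \matrix_(j, i) v j i = 0.
  by rewrite -rowv_lincomb; apply/rowP => i; rewrite !mxE t0.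
by move/eqP; rewrite mulmx_free_eq0 // => /eqP /rowP /(_ j); rewrite !mxE.
Qed.

Definition affine_span D d (p : 'rV[R]_D) (V : 'M[R]_(d, D)) (x : vec D) :=
  exists t : 'rV[R]_d, rowv x = p + t *m V.

Lemma affine_spanP D d (p : vec D) (v : 'I_d -> vec D) x :
  (exists t, x = vadd p (lincomb t v)) <->
  affine_span (rowv p) (\matrix_(j, i) v j i) x.
Proof.
split => [[t ->] | [t x_eq]].
  by exists (rowv t); rewrite rowv_vadd rowv_lincomb.
exists (fun j => t 0 j); apply: rowv_inj.
by rewrite rowv_vadd rowv_lincomb x_eq rowvK.
Qed.

Lemma is_affine_dP D d (A : vec D -> Prop) :
  is_affine_d d A <->
  exists p (V : 'M[R]_(d, D)),
    row_free V /\ forall x, A x <-> affine_span p V x.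
Proof.
split => [[p [v [v_indep A_eq]]] | [p [V [V_free A_eq]]]].
  exists (rowv p), (\matrix_(j, i) v j i).
  split; first exact/lin_indep_row_free.
  by move=> x; split => [/A_eq/affine_spanP | /affine_spanP/A_eq].
have Vv : \matrix_(j, i) V j i = V by apply/matrixP => j i; rewrite mxE.
exists (fun i => p 0 i), (fun j i => V j i); split.
  by apply/lin_indep_row_free; rewrite Vv.
move=> x; have := affine_spanP (fun i => p 0 i) (fun j i => V j i) x.
by rewrite rowvK Vv => p_span; split => [/A_eq/p_span | /p_span/A_eq].
Qed.

Local Open Scope R_scope.
Theorem mainTheorem2 :
  forall d : nat, (1 <= d)%N ->
  exists C : R, 0 < C /\
  forall (D : nat) (L : vec D -> Prop), is_affine_d d L ->
  forall eta : R, 0 < eta ->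
  forall m : nat, (d + 2 <= m)%N ->
  forall z : 'I_m -> vec D, (forall k, inB L eta (z k)) ->
  exists idx : 'I_(d + 1) -> 'I_m, injective idx /\
  exists H : vec D -> Prop, is_affine_d d H /\
    (forall j, H (z (idx j))) /\
    (forall k, inB H (C * eta) (z k)).
Proof.
move=> d _; pose K : R := (8 + 8 * 4 ^ d)%:R.
have K_ge1 : (1 <= K)%R by rewrite ler1n.
exists K; split; first by apply/RltP; apply: lt_le_trans K_ge1.
move=> D L /is_affine_dP [p [V [V_free L_eq]]] eta /RltP eta_gt0 [|m];
  first by rewrite addn2.
rewrite addn2 ltnS => /ltnW d_le_m z z_near.
have Z_near k : exists t, (sqnorm (rowv (z k) - (p + t *m V)) < eta ^+ 2)%R.
  have [a [/L_eq [t a_eq] /RltP]] := z_near k.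
  by rewrite enorm_lt // rowv_vsub a_eq; exists t.
have [g [B [g_inj B_free on_B fit]]] := affine_hull_fit V_free d_le_m Z_near.
exists (adjoin0 g); split; first exact: adjoin0_inj.
exists (affine_span (rowv (z 0%R)) B); split.
  by apply/is_affine_dP; exists (rowv (z 0%R)), B.
split => [i | k].
  rewrite /adjoin0; case: split => [j | _]; first exact: on_B.
  by exists 0%R; rewrite mul0mx addr0.
have [t t_fit] := fit k.
exists (fun i => (rowv (z 0%R) + t *m B)%R ord0 i).
split; first by exists t; rewrite rowvK.
apply/RltP; rewrite enorm_lt ?mulr_gt0 ?(lt_le_trans _ K_ge1) //.
rewrite rowv_vsub rowvK.
apply: lt_le_trans t_fit _; rewrite exprMn ler_wpM2r ?sqr_ge0 // expr2.
by rewrite ler_peMl // (le_trans _ K_ge1).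
Qed.
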